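(* Let $k\ge2$, let $R\subset\mathbb{N}^k$ be a simple region, and let $n$ be such that $S_n^{\mathbb{N}}$ contains both accessible points (points of $R_n$) and boundary points (points of $B_n$). Then for every nonempty collection $C_n\subset B_n$ there exist a point $\bar y\in C_n$ and a $(k-2)$-dimensional affine subspace $\pi_{\bar y}$ of the hyperplane $\{x\in\mathbb{R}^k: x_1+\cdots+x_k=n\}$ such that: (1) $\bar y\in\pi_{\bar y}$; (2) $\pi_{\bar y}$ is given by the two equations $L(x)=m_1x_1+\cdots+m_kx_k=b$ and $x_1+\cdots+x_k=n$, where $b\in\mathbb{N}$ and all $m_i\in\mathbb{N}$, with at least one $m_i$ equal to $0$ and at least one $m_i$ nonzero; (3) $L(x)\ge b+1$ for every $x\in R_n$; (4) $L(y)\ge b+1$ for every $y\in C_n$ with $y\neq\bar y$.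
   Context: For $n\in\mathbb{N}$, $S_n\subset\mathbb{R}^k$ is the set of points with nonnegative coordinates summing to $n$, and $S_n^{\mathbb{N}}=S_n\cap\mathbb{N}^k$. For a region $R\subset\mathbb{N}^k$, its boundary $B$ is the set of points not in $R$ that can be reached in one step (by adding a standard unit vector $e_i$) from a point of $R$. Set $R_n=R\cap S_n^{\mathbb{N}}$ (accessible points of order $n$), $B_n=B\cap S_n^{\mathbb{N}}$ (boundary points of order $n$); points of $S_n^{\mathbb{N}}\setminus R_n$ are inaccessible. $R$ is simple if for every $n$ the convex hull of $R_n$ in $\mathbb{R}^k$ contains no inaccessible point of order $n$. *)

From HB Require Import structures.
From mathcomp Require Import all_boot all_order all_algebra.
From mathcomp Require Import reals.
Set Implicit Arguments. Unset Strict Implicit. Unset Printing Implicit Defensive.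
Import Order.TTheory GRing.Theory Num.Theory.

Definition point (k : nat) := {ffun 'I_k -> nat}.

Definition ord_pt k (x : point k) : nat := \sum_(i < k) x i.

Definition step k (x : point k) (i : 'I_k) : point k :=
  [ffun j => x j + (j == i)].

Definition region k := point k -> Prop.

Definition boundary k (R : region k) : region k :=
  fun x => ~ R x /\ exists y i, R y /\ x = step y i.

Definition level k (R : region k) (n : nat) : region k :=
  fun x => R x /\ ord_pt x = n.

Definition in_hull (F : realType) k (A : region k) (z : 'I_k -> F) : Prop :=
  exists (s : seq (point k)) (w : point k -> F),
    (forall p, p \in s -> A p) /\
    (forall p, 0 <= w p)%R /\
    (\sum_(p <- s) w p = 1)%R /\
    forall i, z i = (\sum_(p <- s) w p * (p i)%:R)%R.

Definition simple_region (F : realType) k (R : region k) : Prop :=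
  forall (n : nat) (x : point k), ord_pt x = n -> ~ R x ->
    ~ in_hull (level R n) (fun i => ((x i)%:R : F)%R).

Definition linf k (m : 'I_k -> nat) (x : point k) : nat := \sum_(i < k) m i * x i.

From mathcomp Require Import all_boot all_order all_algebra.
From mathcomp Require Import reals boolp ring lra.
Import Order.TTheory GRing.Theory Num.Theory.
Set Implicit Arguments. Unset Strict Implicit. Unset Printing Implicit Defensive.

(* Since R is simple, a boundary point y0 of order n is outside the convex hull
   of R_n, so by Gordan's alternative some rational form d satisfies
   d(y0) < d(x) for all x in R_n.  Among the points of R_n and C_n, those
   minimising d all lie in C_n; among them take z of maximal Euclidean norm.
   Then z is exposed: the form t d - <z, .> is minimised on R_n u C_n exactly
   at z once t is large.  Clearing denominators and subtracting the smallest
   coefficient times x_1 + ... + x_k, which is constant (= n) on the points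
   considered, turns it into a form L with natural coefficients, one of them 0. *)

Local Open Scope ring_scope.

Definition dot k (a b : 'I_k -> rat) : rat := \sum_i a i * b i.

Definition vec k (p : point k) : 'I_k -> rat := fun j => (p j)%:R.

Lemma dot_linl k (a b : rat) (x y v : 'I_k -> rat) :
  dot (fun i => a * x i + b * y i) v = a * dot x v + b * dot y v.
Proof. by rewrite /dot !mulr_sumr -big_split; apply: eq_bigr => i _ /=; ring. Qed.

Lemma dot_linr k (a b : rat) (x y v : 'I_k -> rat) :
  dot v (fun i => a * x i + b * y i) = a * dot v x + b * dot v y.
Proof. by rewrite /dot !mulr_sumr -big_split; apply: eq_bigr => i _ /=; ring. Qed.

Lemma dot_self_gt0 k (v : 'I_k -> rat) j : v j != 0 -> 0 < dot v v.
Proof.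
move=> vj_neq0; rewrite /dot (bigD1 j) //= ltr_pwDl //.
  by rewrite lt_def mulf_neq0 // -expr2 sqr_ge0.
by apply: sumr_ge0 => i _; rewrite -expr2 sqr_ge0.
Qed.

Lemma dot_lt_dot_self k (u v : 'I_k -> rat) j :
  dot v v <= dot u u -> u j != v j -> dot u v < dot u u.
Proof.
move=> vv_le uvj; have := @dot_self_gt0 _ (fun i => u i - v i) j.
rewrite subr_eq0 => /(_ uvj) uv_gt0.
have polar : 2 * (dot u u - dot u v)
    = dot u u - dot v v + dot (fun i => u i - v i) (fun i => u i - v i).
  by rewrite /dot -!sumrB mulr_sumr -big_split /=; apply: eq_bigr => i _; ring.
lra.
Qed.

Lemma exists_seq_min (R : realDomainType) (T : eqType) (f : T -> R) (s : seq T) x :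
  x \in s -> exists2 z, z \in s & {in s, forall p, f z <= f p}.
Proof.
case: s => [//|y s] _; elim: s y => [|y' s IH] y.
  by exists y => [|p]; rewrite ?mem_head // inE => /eqP ->.
have [z zs z_min] := IH y'.
have [fyz|fzy] := leP (f y) (f z).
  exists y => [|p]; first exact: mem_head.
  by rewrite in_cons => /orP [/eqP -> // | /z_min]; apply: le_trans.
exists z => [|p]; first by rewrite in_cons zs orbT.
by rewrite in_cons => /orP [/eqP -> | /z_min //]; apply: ltW.
Qed.

Lemma exists_scale_pos (T : eqType) (s : seq T) (a b : T -> rat) :
  {in s, forall x, 0 < a x} -> exists t, {in s, forall x, 0 < t * a x + b x}.
Proof.
move=> a_gt0; pose q x := (`|b x| + 1) / a x.
have q_ge0 x : x \in s -> 0 <= q x.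
  by move=> xs; rewrite divr_ge0 ?addr_ge0 // ltW // a_gt0.
exists (\sum_(y <- s) q y) => x xs.
have q_le : q x <= \sum_(y <- s) q y.
  by rewrite (big_rem x) //= lerDl big_seq sumr_ge0 // => y /mem_rem /q_ge0.
have := ler_wpM2r (ltW (a_gt0 x xs)) q_le.
rewrite /q divfK ?gt_eqF ?a_gt0 //.
have := ler_norm (- b x); rewrite normrN; lra.
Qed.

Definition zero_in_conv k n (V : nat -> 'I_k -> rat) : Prop :=
  exists lam : nat -> rat, [/\ forall i, 0 <= lam i, \sum_(0 <= i < n) lam i = 1
    & forall j, \sum_(0 <= i < n) lam i * V i j = 0].

Definition separable k n (V : nat -> 'I_k -> rat) : Prop :=
  exists d, forall i, (i < n)%N -> 0 < dot d (V i).

Lemma zero_in_conv_head k n (V : nat -> 'I_k -> rat) :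
  (forall j, V 0%N j = 0) -> zero_in_conv n.+1 V.
Proof.
move=> V0; exists (fun i => (i == 0%N)%:R); split=> [i||j]; first exact: ler0n.
  by rewrite big_nat_recl //= big1 ?addr0.
by rewrite big_nat_recl //= V0 mulr0 add0r big1 // => i _; rewrite mul0r.
Qed.

Lemma zero_in_conv_behead k n (V : nat -> 'I_k -> rat) :
  zero_in_conv n (fun i => V i.+1) -> zero_in_conv n.+1 V.
Proof.
case=> lam [lam_ge0 lam_sum lamV].
exists (fun i => if i is i'.+1 then lam i' else 0); split=> [[]//||j].
  by rewrite big_nat_recl //= add0r.
by rewrite big_nat_recl //= mul0r add0r lamV.
Qed.

Lemma convex_comb_gt0 n (lam a : nat -> rat) :
  (forall i, 0 <= lam i) -> \sum_(0 <= i < n) lam i = 1 ->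
  (forall i, (i < n)%N -> 0 < a i) -> 0 < \sum_(0 <= i < n) lam i * a i.
Proof.
move=> lam_ge0 lam_sum a_gt0; rewrite big_mkord in lam_sum; rewrite big_mkord.
have term_ge0 (i : 'I_n) : true -> 0 <= lam i * a i.
  by move=> _; rewrite mulr_ge0 // ltW // a_gt0.
rewrite lt_def psumr_neq0 //; apply/andP; split; last exact: sumr_ge0.
have : \sum_(i < n) lam i != 0 by rewrite lam_sum oner_neq0.
rewrite psumr_neq0 // => /hasP [i _ /andP [_ lam_i_gt0]].
by apply/hasP; exists i; rewrite ?mem_index_enum // mulr_gt0 // a_gt0.
Qed.

(* The hypothesis is about the tail projected along w := V 0 onto the hyperplane
   [d = 0]; a convex combination giving 0 there lifts to one of all of V. *)
Lemma zero_in_conv_project k n (V : nat -> 'I_k -> rat) (d : 'I_k -> rat) :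
  (forall i, (i < n)%N -> 0 < dot d (V i.+1)) -> dot d (V 0%N) <= 0 ->
  zero_in_conv n (fun i j => dot d (V i.+1) * V 0%N j + - dot d (V 0%N) * V i.+1 j) ->
  zero_in_conv n.+1 V.
Proof.
move=> dV dw_le0 [lam [lam_ge0 lam_sum lamV]].
set c := - dot d (V 0%N); set al := \sum_(0 <= i < n) lam i * dot d (V i.+1).
have al_gt0 : 0 < al := convex_comb_gt0 lam_ge0 lam_sum dV.
have alc_neq0 : al + c != 0 by rewrite gt_eqF // ltr_wpDr // oppr_ge0.
exists (fun i => (if i is i'.+1 then c * lam i' else al) / (al + c)); split.
- by case=> [|i]; rewrite divr_ge0 ?mulr_ge0 ?addr_ge0 ?oppr_ge0 // ltW.
- rewrite big_nat_recl //= -big_distrl /= -big_distrr /= lam_sum mulr1.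
  by rewrite -mulrDl divff.
move=> j; have comb : al * V 0%N j + c * \sum_(0 <= i < n) lam i * V i.+1 j = 0.
  rewrite /al mulr_suml mulr_sumr -big_split /= -[RHS](lamV j).
  by apply: eq_bigr => i _; rewrite /c; ring.
rewrite big_nat_recl //=.
have -> : \sum_(0 <= i < n) c * lam i / (al + c) * V i.+1 j
    = c / (al + c) * \sum_(0 <= i < n) lam i * V i.+1 j.
  by rewrite mulr_sumr; apply: eq_bigr => i _; ring.
by rewrite mulrAC [c / _ * _]mulrAC -mulrDl comb mul0r.
Qed.

Lemma separable_cons k n (V : nat -> 'I_k -> rat) (D : 'I_k -> rat) :
  0 < dot (V 0%N) (V 0%N) -> dot D (V 0%N) = 0 ->
  (forall i, (i < n)%N -> 0 < dot D (V i.+1)) -> separable n.+1 V.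
Proof.
move=> w_gt0 Dw DV.
have [|t tD] := @exists_scale_pos _ (iota 0 n) (fun i => dot D (V i.+1))
  (fun i => dot (V 0%N) (V i.+1)).
  by move=> i; rewrite mem_iota add0n => /DV.
exists (fun j => t * D j + 1 * V 0%N j) => -[_|i i_lt]; rewrite dot_linl mul1r.
  by rewrite Dw mulr0 add0r.
by apply: tD; rewrite mem_iota add0n.
Qed.

Lemma gordan k n (V : nat -> 'I_k -> rat) : zero_in_conv n V \/ separable n V.
Proof.
elim: n V => [|n IH] V; first by right; exists (fun _ => 0).
have [w0 | /forallPn [j wj]] := boolP [forall j, V 0%N j == 0].
  by left; apply: zero_in_conv_head => j; apply/eqP/(forallP w0).
have [|[d dV]] := IH (fun i => V i.+1); first by move/zero_in_conv_behead; left.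
have [dw_gt0 | dw_le0] := ltrP 0 (dot d (V 0%N)).
  by right; exists d => -[|i] // /dV.
have [|[e eW]] := IH (fun i j => dot d (V i.+1) * V 0%N j + - dot d (V 0%N) * V i.+1 j).
  by move/(zero_in_conv_project dV dw_le0); left.
right; apply: (@separable_cons _ _ _
  (fun j => dot e (V 0%N) * d j + - dot d (V 0%N) * e j)).
- exact: dot_self_gt0 wj.
- by rewrite dot_linl; ring.
by move=> i /eW; rewrite dot_linl dot_linr; lra.
Qed.

Lemma level_seq k (A : region k) n :
  exists s : seq (point k), uniq s /\ forall p, p \in s <-> level A n p.
Proof.
pose box := [seq [ffun i => nat_of_ord (f i)] | f : {ffun 'I_k -> 'I_n.+1} <-
  enum {ffun 'I_k -> 'I_n.+1}].
exists (undup [seq p <- box | `[< level A n p >]]); split=> [|p]; first exact: undup_uniq.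
rewrite mem_undup mem_filter; split=> [/andP [/asboolP] //|lp].
rewrite asboolT //=; apply/mapP; exists [ffun i => inord (p i)]; first by rewrite mem_enum.
apply/ffunP => i; rewrite !ffunE inordK // ltnS; case: lp => _ <-.
by rewrite /ord_pt (bigD1 i) //= leq_addr.
Qed.

Lemma simple_separation (F : realType) k (R : region k) n (y : point k) :
  simple_region F R -> ord_pt y = n -> ~ R y ->
  exists d, forall x, level R n x -> dot d (vec y) < dot d (vec x).
Proof.
move=> simpleR oy nRy; have [s [s_uniq sE]] := level_seq R n.
have [[lam [lam_ge0 lam_sum lamV]] | [d dV]] :=
  gordan (size s) (fun i j => vec (nth y s i) j - vec y j); last first.
  exists d => x /sE xs; rewrite -subr_gt0 /dot -sumrB.
  have := dV (index x s); rewrite index_mem nth_index // => /(_ xs).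
  by under eq_bigr do rewrite -mulrBr.
have reindex (G : nat -> point k -> F) :
    \sum_(p <- s) G (index p s) p = \sum_(0 <= i < size s) G i (nth y s i).
  by rewrite (big_nth y); apply: eq_big_nat => i /andP [_ i_lt]; rewrite index_uniq.
exfalso; apply: (simpleR n y oy nRy); exists s, (fun p => ratr (lam (index p s))).
split; first by move=> p /sE.
split; first by move=> p; rewrite ler0q.
split; first by rewrite (reindex (fun i _ => ratr (lam i))) -rmorph_sum lam_sum rmorph1.
move=> i; have := lamV i; under eq_bigr do rewrite mulrBr.
rewrite sumrB -mulr_suml lam_sum mul1r => /eqP; rewrite subr_eq0 => /eqP yE.
rewrite -(ratr_nat F (y i)) -[(y i)%:R]/(vec y i) -yE rmorph_sum.
rewrite (reindex (fun j p => ratr (lam j) * (p i)%:R)).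
by apply: eq_big_nat => j _; rewrite rmorphM rmorph_nat.
Qed.

Lemma exposed_minimizer k (P : seq (point k)) (d : 'I_k -> rat) x :
  x \in P ->
  exists2 z, z \in P & {in P, forall p, dot d (vec z) <= dot d (vec p)} /\
    exists D, {in P, forall p, p != z -> dot D (vec z) < dot D (vec p)}.
Proof.
pose f p := dot d (vec p); move=> xP; have [z1 z1P z1_min] := exists_seq_min f xP.
have z1_face : z1 \in [seq p <- P | f p == f z1] by rewrite mem_filter eqxx.
have [z] := exists_seq_min (fun p => - dot (vec p) (vec p)) z1_face.
rewrite mem_filter => /andP [/eqP fz zP] z_max.
exists z => //; split=> [p pP|]; first by rewrite -/(f z) fz z1_min.
have [|t t_pos] := @exists_scale_pos _ [seq p <- P | f p != f z]
  (fun p => f p - f z) (fun p => dot (vec z) (vec z) - dot (vec z) (vec p)).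
  by move=> p; rewrite mem_filter => /andP [fpz pP]; rewrite subr_gt0 lt_def fpz fz z1_min.
exists (fun j => t * d j + (-1) * vec z j) => p pP pz; rewrite -subr_gt0 !dot_linl.
have [fpz | fpz] := eqVneq (f p) (f z); last first.
  by have := t_pos p; rewrite mem_filter fpz pP /f => /(_ isT); lra.
have /existsP [j zpj] : [exists j, z j != p j].
  apply: contraR pz; rewrite negb_exists => /forallP zp.
  by apply/eqP/ffunP => j; apply/eqP; rewrite eq_sym; apply/negPn/zp.
have := z_max p; rewrite mem_filter pP fpz fz eqxx lerN2 => /(_ isT) norm_le.
have := dot_lt_dot_self norm_le (j := j); rewrite eqr_nat => /(_ zpj).
by move: fpz; rewrite /f => ->; lra.
Qed.

Lemma scale_to_int k (D : 'I_k -> rat) :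
  exists (M : int) (z : 'I_k -> int), 0 < M /\ forall i, (z i)%:~R = M%:~R * D i.
Proof.
exists (\prod_i denq (D i)), (fun i => numq (D i) * \prod_(j | j != i) denq (D j)).
split=> [|i]; first by apply: prodr_gt0 => i _; exact: denq_gt0.
by rewrite [in RHS](bigD1 i) //= !intrM numqE; ring.
Qed.

Lemma nat_form k (D : 'I_k -> rat) : (0 < k)%N ->
  exists m : 'I_k -> nat, (exists i, m i = 0%N) /\
    forall p q : point k, ord_pt p = ord_pt q ->
      dot D (vec p) < dot D (vec q) -> (linf m p < linf m q)%N.
Proof.
move=> k_gt0; have [M [z [M_gt0 zE]]] := scale_to_int D.
have [i0 _ i0_min] := exists_seq_min z (mem_enum 'I_k (Ordinal k_gt0)).
pose m j := `|z j - z i0|%N.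
have mE j : (m j)%:R = (z j)%:~R - (z i0)%:~R :> rat.
  by rewrite /m -intrB natr_absz ger0_norm // subr_ge0 i0_min ?mem_enum.
have linfE p : (linf m p)%:R = M%:~R * dot D (vec p) - (z i0)%:~R * (ord_pt p)%:R :> rat.
  rewrite /linf /ord_pt !natr_sum mulr_sumr /dot mulr_sumr -sumrB.
  by apply: eq_bigr => j _; rewrite natrM mE zE /vec; ring.
exists m; split=> [|p q opq Dpq]; first by exists i0; rewrite /m subrr.
by rewrite -(ltr_nat rat) !linfE opq ltrD2r ltr_pM2l ?ltr0z.
Qed.

Local Close Scope ring_scope.

Theorem lemma1 (F : realType) (k : nat) (R : region k) (n : nat) :
  2 <= k ->
  simple_region F R ->
  (exists x, level R n x) ->
  (exists y, level (boundary R) n y) ->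
  forall C : region k,
    (forall y, C y -> level (boundary R) n y) ->
    (exists y, C y) ->
    exists ybar, C ybar /\
      exists (m : 'I_k -> nat) (b : nat),
        (exists i, m i = 0) /\ (exists i, m i <> 0) /\
        linf m ybar = b /\ ord_pt ybar = n /\
        (forall x, level R n x -> b.+1 <= linf m x) /\
        (forall y, C y -> y <> ybar -> b.+1 <= linf m y).
Proof.
move=> k_ge2 simpleR [x0 [Rx0 ox0]] _ C C_bd [y0 Cy0].
have [[nRy0 _] oy0] := C_bd y0 Cy0.
have [d d_sep] := simple_separation simpleR oy0 nRy0.
have [s [_ sE]] := level_seq (fun p => R p \/ C p) n.
have y0s : y0 \in s by apply/sE; split; first by right.
have [z zs [z_min [D D_exp]]] := exposed_minimizer d y0s.
have zC : C z.
  have /sE [[Rz|//] oz] := zs.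
  by have := d_sep z (conj Rz oz); rewrite ltNge z_min.
have [[nRz _] oz] := C_bd z zC.
have [m [m0 m_lt]] := nat_form D (ltnW k_ge2).
have z_lt p : p \in s -> p != z -> linf m z < linf m p.
  by move=> ps pz; apply: m_lt (D_exp p ps pz); have /sE [_ ->] := ps.
have x0s : x0 \in s by apply/sE; split; first by left.
have x0z : x0 != z by apply/eqP => x0z; apply: nRz; rewrite -x0z.
exists z; split=> //; exists m, (linf m z); split=> //; split.
  have [i /eqP mi | m_eq0] := pickP (fun i => m i != 0); first by exists i.
  have := z_lt x0 x0s x0z; rewrite /linf !big1 // => i _; by rewrite (eqP (negbFE (m_eq0 i))).
split=> //; split=> //; split=> [x [Rx ox] | y Cy /eqP yz].
  apply: z_lt; first by apply/sE; split; first by left.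
  by apply/eqP => xz; apply: nRz; rewrite -xz.
have [_ oy] := C_bd y Cy.
by apply: z_lt => //; apply/sE; split; first by right.
Qed.
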